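(* Let $m\ge2$, let $S\le H\le G$, and let $W$ be a cyclic $R_mH$-module which (with $S$ acting trivially) is a free $R_m(H/S)$-module. Then $W$ does not have property $\mathcal P(H)$.
   Context: $p$ is a prime, $G$ a cyclic group of order $p^n$, $R_m=\mathbb Z/p^m\mathbb Z$. Let $H\le G$ with generator $\tau$. For $m\ge2$, an $R_mH$-module $W$ has property $\mathcal P(H)$ if there exist an integer $s\ge0$ and elements $y,z\in W\setminus\big((\tau^{p^s}-1)W+pW\big)$ such that $(\tau^{p^s}-1)y=p^{m-1}z$. *)

From HB Require Import structures.
From mathcomp Require Import all_boot all_order all_algebra all_fingroup all_solvable.
Set Implicit Arguments. Unset Strict Implicit. Unset Printing Implicit Defensive.
Import GRing.Theory.
Local Open Scope ring_scope.

(* R_m = Z/p^m Z is 'Z_(p^m).  An R_m H-module is an R_m-module W together with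
   a linear action rho of the group H on W. *)
Definition is_RH_module (gT : finGroupType) (R : pzRingType) (W : lmodType R)
  (H : {group gT}) (rho : gT -> W -> W) : Prop :=
  [/\ (forall x, x \in H -> forall (a : R) (u v : W),
          rho x (a *: u + v) = a *: rho x u + rho x v),
      (forall u, rho 1%g u = u) &
      (forall x y, x \in H -> y \in H -> forall u, rho (x * y)%g u = rho x (rho y u))].

Definition cyclic_RH_module (gT : finGroupType) (R : pzRingType) (W : lmodType R)
  (H : {group gT}) (rho : gT -> W -> W) : Prop :=
  exists w0 : W, forall w : W, exists c : gT -> R,
    w = \sum_(h in H) c h *: rho h w0.

Definition acts_trivially (gT : finGroupType) (W : Type)
  (S : {group gT}) (rho : gT -> W -> W) : Prop :=
  forall s, s \in S -> forall w, rho s w = w.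

(* With S acting trivially, W is a free R(H/S)-module: there is a basis b such that
   every w is a unique R(H/S)-linear combination of b; an element of the group ring
   R(H/S) is a coefficient function on the cosets of S in H, the coset C acting
   through (any) representative repr C. *)
Definition free_RHS_module (gT : finGroupType) (R : pzRingType) (W : lmodType R)
  (H S : {group gT}) (rho : gT -> W -> W) : Prop :=
  exists b : seq W,
    (forall w : W, exists c : nat -> {set gT} -> R,
        w = \sum_(i < size b) \sum_(C in rcosets S H) c i C *: rho (repr C) b`_i) /\
    (forall c : nat -> {set gT} -> R,
        \sum_(i < size b) \sum_(C in rcosets S H) c i C *: rho (repr C) b`_i = 0 ->
        forall i, (i < size b)%N -> forall C, C \in rcosets S H -> c i C = 0).

(* Property P(H) for an R_m H-module W, H = <[tau]>:
   there are s >= 0 and y, z not in (tau^(p^s) - 1) W + p W with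
   (tau^(p^s) - 1) y = p^(m-1) z. *)
Definition in_tauW_pW (gT : finGroupType) (W : zmodType) (rho : gT -> W -> W)
  (t : gT) (p : nat) (y : W) : Prop :=
  exists a b : W, y = (rho t a - a) + b *+ p.

Definition property_P (gT : finGroupType) (R : pzRingType) (W : lmodType R)
  (rho : gT -> W -> W) (tau : gT) (p m : nat) : Prop :=
  exists (s : nat) (y z : W),
    ~ in_tauW_pW rho (tau ^+ (p ^ s))%g p y /\
    ~ in_tauW_pW rho (tau ^+ (p ^ s))%g p z /\
    rho (tau ^+ (p ^ s))%g y - y = z *+ (p ^ m.-1).

From HB Require Import structures.
From mathcomp Require Import all_boot all_order all_algebra all_fingroup all_solvable.
From mathcomp Require Import zify.
Set Implicit Arguments. Unset Strict Implicit. Unset Printing Implicit Defensive.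
Import GRing.Theory.
Local Open Scope ring_scope.

(* Fix s and put sigma = tau^(p^s), acting on W.  The image of sigma in the
   cyclic p-group H/S generates the subgroup of order r, where g * r = |H : S|
   and p^s = g modulo |H : S|.  Reading a free R(H/S)-basis b of W along the
   cosets of <sigma> gives a basis e(i, j, u) = tau^(j + u g) b_i of W on which
   sigma acts as a cyclic shift u -> u + 1 (mod r): W is a free R<sigma>-module.
   For such a "cyclic shift basis" the norm N = 1 + sigma + ... + sigma^(r-1)
   kills (sigma - 1) W, and a vector z lies in (sigma - 1) W + p W as soon as
   the sums of its coordinates along each orbit are multiples of p.  Hence
   (sigma - 1) y = p^(m-1) z forces N z *+ p^(m-1) = 0, so these orbit sums are
   annihilated by p^(m-1) in Z/p^m, i.e. are multiples of p, and z lies in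
   (sigma - 1) W + p W: the witness z of property P cannot exist. *)

Lemma sum_rot (V : zmodType) (r u : nat) (r_gt0 : (0 < r)%N) (f : nat -> V) :
  \sum_(l < r) f ((u + l) %% r)%N = \sum_(v < r) f v.
Proof.
pose sh (l : 'I_r) := Ordinal (ltn_pmod (u + l) r_gt0).
have sh_inj : injective sh.
  move=> l l' /(congr1 val) /= /eqP; rewrite eqn_modDl !modn_small //.
  by move/eqP; apply: val_inj.
by rewrite [RHS](reindex_inj sh_inj).
Qed.

Lemma sum_split_mul (V : zmodType) (g r : nat) (h : nat -> V) :
  \sum_(0 <= j < g * r) h j = \sum_(j0 < g) \sum_(u < r) h (j0 + u * g)%N.
Proof.
elim: r => [|r IH].
  by rewrite muln0 big_geq // big1 // => j0 _; rewrite big_ord0.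
rewrite (big_cat_nat _ (n := g * r)) ?leq_mul2l ?leqnSn ?orbT //= IH.
rewrite -{1}(add0n (g * r)%N) big_addn mulnS addnK.
rewrite big_mkord -big_split /=; apply: eq_bigr => j0 _.
by rewrite big_ord_recr /= mulnC.
Qed.

Section IteratedLinear.
Variables (R : pzRingType) (W : lmodType R) (F : {linear W -> W}).

Lemma iter_linear l : linear (iter l F).
Proof. by elim: l => [//|l IH] a u v /=; rewrite IH linearP. Qed.

Definition iterL l : {linear W -> W} :=
  HB.pack (iter l F) (GRing.isLinear.Build _ _ _ _ (iter l F) (iter_linear l)).

Definition partial_norm u w := \sum_(l < u) iterL l w.

Lemma partial_norm_coboundary u w :
  F (partial_norm u w) - partial_norm u w = iterL u w - iterL 0 w.
Proof.
rewrite /partial_norm linear_sum -sumrB -(telescope_sumr (fun l => iterL l w))//.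
by rewrite big_mkord.
Qed.

End IteratedLinear.

Section CyclicShiftBasis.
(* A linear endomorphism F of W admitting a basis e i u (i : J, u < r) on
   which it acts by the cyclic shift u -> u + 1 mod r: W is then a free
   module over R<F>, with F of order r. *)
Variables (R : pzRingType) (W : lmodType R) (F : {linear W -> W}).
Variables (J : finType) (r : nat) (e : J -> nat -> W).
Hypothesis r_gt0 : (0 < r)%N.
Hypothesis F_shift : forall i u, (u < r)%N -> F (e i u) = e i (u.+1 %% r).
Hypothesis e_span : forall w, exists c : J -> nat -> R,
  w = \sum_i \sum_(u < r) c i u *: e i u.
Hypothesis e_free : forall c : J -> nat -> R,
  \sum_i \sum_(u < r) c i u *: e i u = 0 -> forall i u, (u < r)%N -> c i u = 0.

Lemma iter_shift i u l : (u < r)%N -> iterL F l (e i u) = e i ((u + l) %% r).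
Proof.
move=> u_lt; elim: l => [|l IH] /=; first by rewrite addn0 modn_small.
rewrite -[LHS]/(F (iterL F l (e i u))) IH F_shift ?ltn_pmod //.
by rewrite -addn1 modnDml addn1 addnS.
Qed.

Lemma iter_period w : iterL F r w = w.
Proof.
have [c ->] := e_span w; rewrite linear_sum; apply: eq_bigr => i _.
rewrite linear_sum; apply: eq_bigr => u _.
by rewrite linearZZ iter_shift // addnC modnDl modn_small.
Qed.

Definition shift_norm w := \sum_(l < r) iterL F l w.

Lemma shift_norm_linear : linear shift_norm.
Proof.
move=> a u v; rewrite /shift_norm scaler_sumr -big_split.
by apply: eq_bigr => l _; rewrite linearP.
Qed.

Definition normL : {linear W -> W} :=
  HB.pack shift_norm (GRing.isLinear.Build _ _ _ _ shift_norm shift_norm_linear).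

Lemma norm_coboundary w : normL (F w - w) = 0.
Proof.
have norm_F : normL (F w) = F (partial_norm F r w).
  rewrite /= /shift_norm /partial_norm linear_sum.
  by apply: eq_bigr => l _; rewrite -[RHS]/(iter l.+1 F w) iterSr.
rewrite linearB norm_F -[normL w]/(partial_norm F r w).
by rewrite partial_norm_coboundary iter_period subrr.
Qed.

Lemma norm_basis i u : (u < r)%N -> normL (e i u) = \sum_(v < r) e i v.
Proof.
move=> u_lt; rewrite -[normL _]/(\sum_(l < r) iterL F l (e i u)).
under eq_bigr => l _ do rewrite iter_shift //.
exact: sum_rot.
Qed.

Lemma orbit_sum_decomposition (c : J -> nat -> R) :
  let a := \sum_i \sum_(u < r) c i u *: partial_norm F u (e i 0) in
  \sum_i \sum_(u < r) c i u *: e i u =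
    (F a - a) + \sum_i (\sum_(u < r) c i u) *: e i 0.
Proof.
rewrite /= linear_sum -sumrB -big_split; apply: eq_bigr => i _ /=.
rewrite linear_sum -sumrB scaler_suml -big_split; apply: eq_bigr => u _ /=.
rewrite linearZZ -scalerBr partial_norm_coboundary -scalerDr subrK.
by rewrite iter_shift // add0n modn_small.
Qed.

Lemma shift_coboundary_divisible (Nn p : nat) y z :
  (forall x : R, x *+ Nn = 0 -> exists d, x = d *+ p) ->
  F y - y = z *+ Nn -> exists a b, z = (F a - a) + b *+ p.
Proof.
move=> annih_div yz; have [c z_def] := e_span z.
pose orbit_sum i := \sum_(u < r) c i u.
have norm_z : normL z *+ Nn = \sum_i \sum_(v < r) (orbit_sum i *+ Nn) *: e i v.
  rewrite z_def linear_sum -sumrMnl; apply: eq_bigr => i _.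
  rewrite linear_sum; under eq_bigr => u _ do rewrite linearZZ norm_basis //.
  rewrite -scaler_suml scaler_sumr -sumrMnl; apply: eq_bigr => v _.
  by rewrite scalerMnl.
have orbit_div i : exists d, orbit_sum i = d *+ p.
  apply: annih_div; apply: (e_free (c := fun i _ => orbit_sum i *+ Nn)) r_gt0.
  by rewrite -norm_z -linearMn -yz norm_coboundary.
have [d d_def] := fin_all_exists orbit_div.
exists (\sum_i \sum_(u < r) c i u *: partial_norm F u (e i 0)).
exists (\sum_i d i *: e i 0).
rewrite z_def orbit_sum_decomposition -sumrMnl; congr (_ + _).
by apply: eq_bigr => i _; rewrite scalerMnl -d_def.
Qed.

End CyclicShiftBasis.

Section CyclicQuotient.
Variables (gT : finGroupType) (H S : {group gT}) (tau : gT).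
Hypotheses (sSH : S \subset H) (defH : H :=: <[tau]>%g).

Local Notation q := #|H : S|%g.

Lemma tau_in_H : tau \in H.
Proof. by rewrite defH cycle_id. Qed.

(* H is abelian, so it normalizes S. *)
Lemma norm_S : H \subset 'N(S)%g.
Proof.
have abH : abelian H by rewrite defH cycle_abelian.
by apply: normal_norm; rewrite -sub_abelian_normal.
Qed.

Lemma tau_norm : tau \in 'N(S)%g.
Proof. exact: subsetP norm_S _ tau_in_H. Qed.

(* The image of tau generates H / S, so it has order |H : S|. *)
Lemma order_coset_tau : #[coset S tau]%g = q.
Proof.
by rewrite -card_quotient ?norm_S // defH quotient_cycle ?tau_norm.
Qed.

Lemma index_gt0 : (0 < q)%N.
Proof. by rewrite -order_coset_tau order_gt0. Qed.

Lemma rcoset_tauX_eq j j' :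
  ((S :* tau ^+ j)%g == (S :* tau ^+ j')%g) = (j == j' %[mod q]).
Proof.
rewrite -!val_coset ?groupX ?tau_norm // val_eqE !morphX ?tau_norm //.
by rewrite eq_expg_mod_order order_coset_tau.
Qed.

Lemma rcosets_cycle : rcosets S H = [set (S :* tau ^+ (j : 'I_q))%g | j : 'I_q].
Proof.
apply/setP => C; apply/imsetP/imsetP => [[x xH ->]|[j _ ->]].
  have /cycleP [k ->] : x \in <[tau]>%g by rewrite -defH.
  exists (Ordinal (ltn_pmod k index_gt0)) => //=.
  by rewrite rcosetE; apply/eqP; rewrite rcoset_tauX_eq modn_mod.
by exists (tau ^+ j)%g; rewrite ?rcosetE // groupX ?tau_in_H.
Qed.

Lemma tauX_in_S j : (q %| j)%N -> (tau ^+ j)%g \in S.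
Proof.
move=> q_dvd_j; have := rcoset_refl S (tau ^+ j)%g.
suff -> : (S :* tau ^+ j)%g = (S :* tau ^+ 0)%g by rewrite expg0 rcoset1.
by apply/eqP; rewrite rcoset_tauX_eq mod0n.
Qed.

Definition coset_index (C : {set gT}) : nat :=
  odflt 0%N (omap val [pick j : 'I_q | (S :* tau ^+ j)%g == C]).

Lemma coset_indexK j : (j < q)%N -> coset_index (S :* tau ^+ j)%g = j.
Proof.
move=> j_lt; rewrite /coset_index; case: pickP => [j' /= | none].
  by rewrite rcoset_tauX_eq !modn_small // => /eqP.
by have := none (Ordinal j_lt); rewrite eqxx.
Qed.

End CyclicQuotient.

Section ShiftBasisOfFreeModule.
Variables (gT : finGroupType) (H S : {group gT}) (tau : gT).
Variables (R : pzRingType) (W : lmodType R) (rho : gT -> W -> W).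
Hypotheses (sSH : S \subset H) (defH : H :=: <[tau]>%g).
Hypotheses (rmod : is_RH_module H rho) (triv : acts_trivially S rho).

Local Notation q := #|H : S|%g.

Lemma rho_tauX_mod a a' w :
  (a = a' %[mod q])%N -> rho (tau ^+ a)%g w = rho (tau ^+ a')%g w.
Proof.
have [_ _ rho_mul] := rmod; have tauH := tau_in_H defH.
suff rho_modq c : rho (tau ^+ c)%g w = rho (tau ^+ (c %% q))%g w.
  by move=> eq_a; rewrite rho_modq eq_a -rho_modq.
rewrite {1}(divn_eq c q) expgD rho_mul ?groupX // triv //.
by rewrite (tauX_in_S sSH defH) ?dvdn_mull.
Qed.

Lemma rho_repr x w : x \in H -> rho (repr (S :* x))%g w = rho x w.
Proof.
have [_ _ rho_mul] := rmod; move=> xH.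
have /rcosetP [s sS ->] : repr (S :* x)%g \in (S :* x)%g.
  exact: mem_repr (rcoset_refl _ _).
by rewrite rho_mul ?(subsetP sSH _ sS) // triv.
Qed.

Lemma sum_rcosets (phi : {set gT} -> R) w :
  \sum_(C in rcosets S H) phi C *: rho (repr C) w =
  \sum_(0 <= j < q) phi (S :* tau ^+ j)%g *: rho (tau ^+ j)%g w.
Proof.
rewrite (rcosets_cycle sSH defH) big_imset /=.
  by rewrite big_mkord; apply: eq_bigr => j _; rewrite rho_repr ?groupX ?tau_in_H.
move=> j j' _ _ /eqP; rewrite (rcoset_tauX_eq sSH defH) !modn_small // => /eqP.
exact: val_inj.
Qed.

Variables (b : seq W) (g r : nat).
Hypothesis grq : (g * r)%N = q.

Definition shift_basis (x : 'I_(size b) * 'I_g) (u : nat) : W :=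
  rho (tau ^+ (x.2 + u * g))%g b`_x.1.

Lemma sum_shift_basis (c : nat -> {set gT} -> R) :
  \sum_(i < size b) \sum_(C in rcosets S H) c i C *: rho (repr C) b`_i =
  \sum_(x : 'I_(size b) * 'I_g) \sum_(u < r)
     c x.1 (S :* tau ^+ (x.2 + u * g))%g *: shift_basis x u.
Proof.
rewrite -(pair_big xpredT xpredT (fun (i : 'I_(size b)) (j0 : 'I_g) =>
  \sum_(u < r) c i (S :* tau ^+ (j0 + u * g))%g *:
     rho (tau ^+ (j0 + u * g))%g b`_i)) /=.
by apply: eq_bigr => i _; rewrite sum_rcosets -grq sum_split_mul.
Qed.

Lemma shift_basis_step t x u : (t = g %[mod q])%N -> (u < r)%N ->
  rho (tau ^+ t)%g (shift_basis x u) = shift_basis x (u.+1 %% r).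
Proof.
have [_ _ rho_mul] := rmod; have tauH := tau_in_H defH.
move=> t_g u_lt; rewrite /shift_basis -rho_mul ?groupX // -expgD.
apply: rho_tauX_mod.
rewrite -[in LHS]modnDml t_g modnDml muln_modl (mulnC r g) grq modnDmr.
by congr (_ %% _)%N; rewrite mulSn; lia.
Qed.

Hypothesis b_span : forall w : W, exists c : nat -> {set gT} -> R,
  w = \sum_(i < size b) \sum_(C in rcosets S H) c i C *: rho (repr C) b`_i.
Hypothesis b_free : forall c : nat -> {set gT} -> R,
  \sum_(i < size b) \sum_(C in rcosets S H) c i C *: rho (repr C) b`_i = 0 ->
  forall i, (i < size b)%N -> forall C, C \in rcosets S H -> c i C = 0.

Lemma shift_basis_span w : exists c : 'I_(size b) * 'I_g -> nat -> R,
  w = \sum_x \sum_(u < r) c x u *: shift_basis x u.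
Proof.
have [c ->] := b_span w; rewrite sum_shift_basis.
by exists (fun (x : 'I_(size b) * 'I_g) u => c x.1 (S :* tau ^+ (x.2 + u * g))%g).
Qed.

(* ... and is free: a relation on it is a relation on b over R(H/S). *)
Lemma shift_basis_free (c : 'I_(size b) * 'I_g -> nat -> R) :
  \sum_x \sum_(u < r) c x u *: shift_basis x u = 0 ->
  forall x u, (u < r)%N -> c x u = 0.
Proof.
move=> c_rel x u u_lt.
have g_gt0 : (0 < g)%N.
  by move: (index_gt0 sSH defH); rewrite -grq muln_gt0 => /andP[].
have index_lt (j0 : 'I_g) v : (v < r)%N -> (j0 + v * g < q)%N.
  by rewrite -grq; have := ltn_ord j0; nia.
pose idx C := coset_index H S tau C.
pose c' i C := if insub i is Some i'
  then c (i', Ordinal (ltn_pmod (idx C) g_gt0)) (idx C %/ g)%N else 0.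
have c'E (y : 'I_(size b) * 'I_g) v :
    (v < r)%N -> c' y.1 (S :* tau ^+ (y.2 + v * g))%g = c y v.
  case: y => i j0 v_lt; rewrite /c' /idx valK (coset_indexK sSH defH) ?index_lt //.
  congr c; last by rewrite addnC divnMDl // divn_small ?addn0.
  by congr pair; apply: val_inj; rewrite /= addnC modnMDl modn_small.
rewrite -c'E //; apply: b_free => //.
  rewrite sum_shift_basis -[RHS]c_rel; apply: eq_bigr => y _.
  by apply: eq_bigr => v _; rewrite c'E.
rewrite (rcosets_cycle sSH defH); apply/imsetP.
by exists (Ordinal (index_lt x.2 u u_lt)).
Qed.

End ShiftBasisOfFreeModule.

Lemma pow_mod_divisor (p k s : nat) : (0 < p)%N ->
  exists g r, [/\ (0 < r)%N, (g * r)%N = (p ^ k)%N & (p ^ s = g %[mod p ^ k])%N].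
Proof.
move=> p_gt0; case: (leqP s k) => [s_le | k_lt].
  exists (p ^ s)%N, (p ^ (k - s))%N; split => //; first by rewrite expn_gt0 p_gt0.
  by rewrite -expnD subnKC.
exists (p ^ k)%N, 1%N; split; rewrite ?muln1 // modnn.
by apply/eqP; rewrite -/(dvdn _ _) dvdn_exp2l // ltnW.
Qed.

Lemma Zp_pm1_annihilator (p m : nat) (x : 'Z_(p ^ m)) : prime p -> (0 < m)%N ->
  x *+ (p ^ m.-1) = 0 -> exists d, x = d *+ p.
Proof.
move=> p_pr m_gt0 x_ann.
have pm_gt1 : (1 < p ^ m)%N by rewrite -(expn0 p) ltn_exp2l ?prime_gt1.
have x_nat : x = (nat_of_ord x)%:R :> 'Z_(p ^ m) by rewrite natr_Zp.
rewrite x_nat -mulrnA Zp_nat in x_ann; move/(congr1 val): x_ann => /=.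
move: (nat_of_ord x) x_nat => v -> v_ann.
have /dvdnP [d ->] : (p %| v)%N.
  have pm_split : (p ^ m = p * p ^ m.-1)%N by rewrite -expnS prednK.
  rewrite -(@dvdn_pmul2r (p ^ m.-1)) ?expn_gt0 ?prime_gt0 // -pm_split.
  by rewrite /dvdn -{1}(Zp_cast pm_gt1) v_ann.
by exists d%:R; rewrite natrM mulr_natr.
Qed.

Unset Implicit Arguments.

Theorem lemma4p2 (p n m : nat) (gT : finGroupType) (G H S : {group gT}) (tau : gT)
  (W : lmodType 'Z_(p ^ m)) (rho : gT -> W -> W) :
  prime p -> (2 <= m)%N ->
  cyclic G -> #|G| = (p ^ n)%N ->
  H \subset G -> S \subset H -> H :=: <[tau]>%g ->
  is_RH_module H rho ->
  cyclic_RH_module H rho ->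
  acts_trivially S rho ->
  free_RHS_module H S rho ->
  ~ property_P rho tau p m.
Proof.
move=> p_pr m_ge2 _ cardG sHG sSH defH rmod _ triv [b [b_span b_free]]
  [s [y [z [_ [z_out yz]]]]].
have [k qE] : exists k, #|H : S|%g = (p ^ k)%N.
  have : (#|H : S|%g %| p ^ n)%N.
    by rewrite -cardG (dvdn_trans (dvdn_indexg H S)) ?cardSg.
  by case/dvdn_pfactor => // k _; exists k.
have [g [r [r_gt0 grq pg]]] := pow_mod_divisor k s (prime_gt0 p_pr).
rewrite -qE in grq pg.
have [rho_lin _ _] := rmod.
have sigmaH : (tau ^+ (p ^ s))%g \in H by rewrite groupX ?(tau_in_H defH).
pose sigma : {linear W -> W} := HB.pack (rho (tau ^+ (p ^ s))%g)
  (GRing.isLinear.Build _ _ _ _ _ (rho_lin _ sigmaH)).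
pose e := @shift_basis gT tau _ W rho b g.
have sigma_step x u : (u < r)%N -> sigma (e x u) = e x (u.+1 %% r)%N.
  exact: (shift_basis_step sSH defH rmod triv grq).
have p_mult (x : 'Z_(p ^ m)) : x *+ p ^ m.-1 = 0 -> exists d, x = d *+ p.
  by apply: Zp_pm1_annihilator => //; apply: ltnW.
have [a [c z_eq]] := shift_coboundary_divisible r_gt0 sigma_step
  (shift_basis_span sSH defH rmod triv grq b_span)
  (shift_basis_free sSH defH rmod triv grq b_free) p_mult yz.
by apply: z_out; exists a, c.
Qed.
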